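(* Let $\Gamma\curvearrowright X, I$ be a dynamical ideal with $\Gamma$ abelian, and let $W[[X]]$ be the associated permutation model. Then in $W[[X]]$: (1) every set is the union of a well-orderable collection of well-orderable sets; (2) the axiom of choice for families of finite sets implies the full axiom of choice.
   Context: Work in ZFC. $V[[X]]$ is the well-founded model of ZFCA with set of atoms exactly $X$ in which every set of elements is represented by an element; a group action of $\Gamma$ on $X$ extends to $V[[X]]$ by $\gamma\cdot A=\{\gamma\cdot B:B\in A\}$. $\mathrm{stab}(A)=\{\gamma:\gamma\cdot A=A\}$, $\mathrm{pstab}(a)=\{\gamma:\gamma\cdot B=B\ \forall B\in a\}$. A dynamical ideal $\Gamma\curvearrowright X, I$: a group $\Gamma$ acting on $X$ and a $\Gamma$-invariant ideal $I$ on $X$ containing all singletons. Its permutation model $W[[X]]$ is the class of $A\in V[[X]]$ such that $A$ and every element of its transitive closure are symmetric, where $A$ is symmetric if $\mathrm{pstab}(b)\subseteq\mathrm{stab}(A)$ for some $b\in I$. The axiom of choice for families of finite sets: every family of nonempty finite sets has a choice function. *)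

(** * The universe V[[X]] of sets with atoms X
    Elements are well-founded trees: either an atom, or a set given by an
    indexed family of elements. *)
Inductive ZA (X : Type) : Type :=
| atom : X -> ZA X
| mk : forall (I : Type), (I -> ZA X) -> ZA X.
Arguments atom {X} _.
Arguments mk {X} _ _.

Section Model.
Variable X : Type.

Fixpoint eqZ (a b : ZA X) {struct a} : Prop :=
  match a with
  | atom x => match b with atom y => x = y | mk _ _ => False end
  | mk Ix f =>
      match b with
      | atom _ => False
      | mk J g => (forall i, exists j, eqZ (f i) (g j)) /\
                  (forall j, exists i, eqZ (f i) (g j))
      end
  end.

Definition memZ (a b : ZA X) : Prop :=
  match b with atom _ => False | mk Ix f => exists i, eqZ a (f i) end.

Definition isSet (a : ZA X) : Prop :=
  match a with atom _ => False | mk _ _ => True end.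

Definition pairZ (a b : ZA X) : ZA X :=
  mk bool (fun t => if t then mk unit (fun _ => a)
                    else mk bool (fun t' => if t' then a else b)).

Definition succZ (a : ZA X) : ZA X :=
  match a with
  | atom _ => a
  | mk Ix f => mk (option Ix) (fun o => match o with Some i => f i | None => a end)
  end.

Fixpoint vnZ (n : nat) : ZA X :=
  match n with
  | O => mk Empty_set (fun e => match e with end)
  | S m => succZ (vnZ m)
  end.
End Model.

Arguments eqZ {X} _ _.
Arguments memZ {X} _ _.
Arguments isSet {X} _.
Arguments pairZ {X} _ _.
Arguments vnZ {X} _.

Record DynIdeal (X : Type) := {
  grp : Type;
  gmul : grp -> grp -> grp;
  gone : grp;
  ginv : grp -> grp;
  gmulA : forall g h k, gmul g (gmul h k) = gmul (gmul g h) k;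
  gmul1 : forall g, gmul gone g = g;
  gmulV : forall g, gmul (ginv g) g = gone;
  act : grp -> X -> X;
  act1 : forall x, act gone x = x;
  actM : forall g h x, act (gmul g h) x = act g (act h x);
  Id : (X -> Prop) -> Prop;
  Id_sub : forall b c, Id b -> (forall x, c x -> b x) -> Id c;
  Id_union : forall b c, Id b -> Id c -> Id (fun x => b x \/ c x);
  Id_single : forall x, Id (fun y => y = x);
  Id_inv : forall g b, Id b -> Id (fun x => exists y, b y /\ x = act g y)
}.
Arguments grp {X} _.
Arguments gmul {X} _ _ _.
Arguments act {X} _ _ _.
Arguments Id {X} _ _.

Definition abelian {X} (D : DynIdeal X) : Prop :=
  forall g h : grp D, gmul D g h = gmul D h g.

Section Perm.
Context {X : Type} (D : DynIdeal X).

Fixpoint actZ (g : grp D) (a : ZA X) : ZA X :=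
  match a with
  | atom x => atom (act D g x)
  | mk Ix f => mk Ix (fun i => actZ g (f i))
  end.

Definition pstab (b : X -> Prop) (g : grp D) : Prop :=
  forall x, b x -> act D g x = x.

Definition stab (a : ZA X) (g : grp D) : Prop := eqZ (actZ g a) a.

Definition symmetric (a : ZA X) : Prop :=
  exists b, Id D b /\ forall g, pstab b g -> stab a g.

Fixpoint HS (a : ZA X) : Prop :=
  symmetric a /\
  match a with
  | atom _ => True
  | mk Ix f => forall i, HS (f i)
  end.

(** ** Notions interpreted inside the permutation model W[[X]] = {a | HS a} *)

Definition relZ (r x y : ZA X) : Prop := memZ (pairZ x y) r.

Definition wellorderW (r a : ZA X) : Prop :=
  (forall p, memZ p r -> exists x y, memZ x a /\ memZ y a /\ eqZ p (pairZ x y)) /\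
  (forall x, memZ x a -> ~ relZ r x x) /\
  (forall x y z, memZ x a -> memZ y a -> memZ z a ->
      relZ r x y -> relZ r y z -> relZ r x z) /\
  (forall x y, memZ x a -> memZ y a -> relZ r x y \/ eqZ x y \/ relZ r y x) /\
  (forall s, HS s -> (exists z, memZ z s) -> (forall z, memZ z s -> memZ z a) ->
      exists m, memZ m s /\ forall z, memZ z s -> ~ relZ r z m).

Definition wellorderableW (a : ZA X) : Prop :=
  exists r, HS r /\ wellorderW r a.

Definition bijectionW (f a b : ZA X) : Prop :=
  (forall p, memZ p f -> exists x y, memZ x a /\ memZ y b /\ eqZ p (pairZ x y)) /\
  (forall x, memZ x a -> exists y, memZ (pairZ x y) f) /\
  (forall x y y', memZ (pairZ x y) f -> memZ (pairZ x y') f -> eqZ y y') /\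
  (forall x x' y, memZ (pairZ x y) f -> memZ (pairZ x' y) f -> eqZ x x') /\
  (forall y, memZ y b -> exists x, memZ (pairZ x y) f).

Definition finiteW (a : ZA X) : Prop :=
  exists (n : nat) f, HS f /\ bijectionW f a (vnZ n).

Definition choiceFun (f F : ZA X) : Prop :=
  (forall p, memZ p f -> exists x y, memZ x F /\ memZ y x /\ eqZ p (pairZ x y)) /\
  (forall x, memZ x F -> exists y, memZ (pairZ x y) f) /\
  (forall x y y', memZ (pairZ x y) f -> memZ (pairZ x y') f -> eqZ y y').

Definition UnionWO_W : Prop :=
  forall a, HS a -> isSet a ->
    exists c, HS c /\ isSet c /\ wellorderableW c /\
      (forall y, memZ y c -> isSet y /\ wellorderableW y) /\
      (forall z, memZ z a <-> exists y, memZ y c /\ memZ z y).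

Definition AC_W : Prop :=
  forall F, HS F -> (forall x, memZ x F -> exists z, memZ z x) ->
    exists f, HS f /\ choiceFun f F.

Definition ACfin_W : Prop :=
  forall F, HS F -> (forall x, memZ x F -> (exists z, memZ z x) /\ finiteW x) ->
    exists f, HS f /\ choiceFun f F.
End Perm.

From Stdlib Require Import Setoid Morphisms Arith Lia Wf_nat
  Classical ClassicalEpsilon FunctionalExtensionality PropExtensionality.
From mathcomp Require eqtype boolp wochoice.

(* (1) Let [a] be a set of W with support [b0].  Since the group is abelian, a
   group element fixing [a] maps sets supported by an ideal element [B] to sets
   supported by [B], so the part [a_B] of [a] supported by [B] is fixed by
   pstab(b0).  A set whose elements are all supported by [B] is well-orderable
   in W: any well-order of it is supported by [B] as well.  Hence [a] is the
   union of the well-orderable family of well-orderable sets [a_B].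

   (2) If pstab(d) acts trivially on the atoms for some [d] in the ideal, every
   set is symmetric and W satisfies AC.  Otherwise every [d] has some [g] in
   pstab(d) moving an atom [a]; the residue classes of the <g>-orbit of [a]
   modulo its period [k >= 2] form a finite set of W which [g] fixes while
   moving each of its elements.  The family of all translates of these sets is
   in W, and a choice function for it, with support [d], would be fixed by the
   corresponding [g] and so would pick a [g]-fixed element: AC for families of
   finite sets fails. *)

Section WellOrdering.
Import eqtype boolp.

Lemma type_wellorder (K : Type) : exists R : K -> K -> Prop,
  (forall x y, R x y \/ R y x) /\ (forall x y, R x y -> R y x -> x = y) /\
  (forall x y z, R x y -> R y z -> R x z) /\
  (forall P : K -> Prop, (exists x, P x) -> exists m, P m /\ forall y, P y -> R m y).
Proof.
  destruct (wochoice.well_ordering_principle {classic K}) as [R0 HR].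
  pose (R := fun x y : K => is_true (R0 x y)).
  assert (least : forall P : K -> Prop, (exists x, P x) ->
            exists! m, P m /\ forall y, P y -> R m y).
  { intros P [x Px]. destruct (HR (fun z => asbool (P z))) as [m [[Pm Hm] Hu]].
    - exists x. apply asboolT. exact Px.
    - exists m. split.
      + split; [exact (asboolW Pm)|]. intros y Py. apply Hm. apply asboolT. exact Py.
      + intros m' [Pm' Hm']. apply Hu. split; [apply asboolT; exact Pm'|].
        intros y Py. apply Hm'. exact (asboolW Py). }
  assert (refl : forall x, R x x).
  { intro x. destruct (least (fun z => z = x)) as [m [[-> Hm] _]]; eauto. }
  assert (anti : forall x y, R x y -> R y x -> x = y).
  { intros x y Hxy Hyx. destruct (least (fun z => z = x \/ z = y)) as [m [_ Hu]]; [eauto|].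
    transitivity m; [symmetry|]; apply Hu; split; auto; intros z [-> | ->]; auto. }
  exists R. split; [|split; [exact anti|split]].
  - intros x y. destruct (least (fun z => z = x \/ z = y)) as [m [[[-> | ->] Hm] _]]; eauto.
  - intros x y z Hxy Hyz.
    destruct (least (fun w => w = x \/ w = y \/ w = z)) as [m [[[-> | [-> | ->]] Hm] _]]; eauto.
    + rewrite (anti x y) by auto. exact Hyz.
    + rewrite (anti y z) in Hxy by auto. exact Hxy.
  - intros P HP. destruct (least P HP) as [m [Hm _]]. eauto.
Qed.
End WellOrdering.

Lemma invariant_choice {A B : Type} (E : A -> A -> Prop) (P : A -> B -> Prop) :
  (forall a a' b, E a a' -> P a b -> P a' b) -> (forall a a', E a a' -> E a' a) ->
  (forall a, exists b, P a b) ->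
  exists c : A -> B, (forall a, P a (c a)) /\ (forall a a', E a a' -> c a = c a').
Proof.
  intros HP HE Hex. destruct (classic (inhabited B)) as [iB|nB].
  - exists (fun a => epsilon iB (P a)). split.
    + intro a. apply epsilon_spec, Hex.
    + intros a a' Ea. f_equal. extensionality b.
      apply propositional_extensionality. split; apply HP; auto.
  - assert (A -> False) as nA.
    { intro a. apply nB. destruct (Hex a) as [b _]. exact (inhabits b). }
    exists (fun a => False_rect B (nA a)). split; intro a; destruct (nA a).
Qed.

Lemma quotient_wellorder {K : Type} (E : K -> K -> Prop) : Equivalence E ->
  exists lt : K -> K -> Prop,
    (forall k1 k1' k2 k2', E k1 k1' -> E k2 k2' -> lt k1 k2 -> lt k1' k2') /\
    (forall k, ~ lt k k) /\
    (forall k1 k2 k3, lt k1 k2 -> lt k2 k3 -> lt k1 k3) /\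
    (forall k k', lt k k' \/ E k k' \/ lt k' k) /\
    (forall P : K -> Prop, (exists k, P k) -> exists m, P m /\ forall k, P k -> ~ lt k m).
Proof.
  intros HE.
  destruct (type_wellorder K) as [R [Rtot [Ranti [Rtrans Rmin]]]].
  destruct (invariant_choice E (fun k m => E m k)) as [rep [rep_spec rep_eq]].
  { intros k k' m Ek Em. etransitivity; eauto. }
  { intros k k'. apply symmetry. }
  { intro k. exists k. reflexivity. }
  exists (fun k k' => R (rep k) (rep k') /\ rep k <> rep k'). split; [|split; [|split; [|split]]].
  - intros k1 k1' k2 k2' E1 E2. rewrite (rep_eq _ _ E1), (rep_eq _ _ E2). auto.
  - intros k [_ Hk]. auto.
  - intros k1 k2 k3 [L12 N12] [L23 N23]. split; [eauto|].
    intro E13. rewrite E13 in L12. apply N23. auto.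
  - intros k k'. destruct (classic (rep k = rep k')) as [Eq|Ne].
    + right; left. transitivity (rep k); [symmetry; apply rep_spec|].
      rewrite Eq. apply rep_spec.
    + destruct (Rtot (rep k) (rep k')); [left | right; right]; split; auto.
  - intros P [k Pk].
    destruct (Rmin (fun m => exists k, P k /\ rep k = m)) as [m [[k0 [Pk0 <-]] Hm]]; [eauto|].
    exists k0. split; auto. intros k' Pk' [L N]. apply N. apply Ranti; auto. apply Hm. eauto.
Qed.

Section Extensionality.
Variable X : Type.
Implicit Types a b c d u x y : ZA X.

Lemma eqZ_refl a : eqZ a a.
Proof. induction a as [x|I f IH]; simpl; auto. split; intro i; exists i; auto. Qed.

Lemma eqZ_sym a b : eqZ a b -> eqZ b a.
Proof.
  revert b. induction a as [x|I f IH]; intros [y|J g]; simpl; auto.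
  intros [H1 H2]. split.
  - intro j. destruct (H2 j) as [i Hi]. exists i. auto.
  - intro i. destruct (H1 i) as [j Hj]. exists j. auto.
Qed.

Lemma eqZ_trans a b c : eqZ a b -> eqZ b c -> eqZ a c.
Proof.
  revert b c. induction a as [x|I f IH]; intros [y|J g] [z|K h]; simpl; try tauto.
  - congruence.
  - intros [H1 H2] [H3 H4]. split.
    + intro i. destruct (H1 i) as [j Hj]. destruct (H3 j) as [k Hk]. eauto.
    + intro k. destruct (H4 k) as [j Hj]. destruct (H2 j) as [i Hi]. eauto.
Qed.

Lemma memZ_eqZ x x' a a' : eqZ x x' -> eqZ a a' -> memZ x a -> memZ x' a'.
Proof.
  destruct a as [?|I f], a' as [?|J g]; simpl; try tauto.
  intros Ex [H1 _] [i Hi]. destruct (H1 i) as [j Hj]. exists j.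
  eapply eqZ_trans; [apply eqZ_sym, Ex|]. eapply eqZ_trans; eauto.
Qed.

Lemma memZ_mk (I : Type) (f : I -> ZA X) i : memZ (f i) (mk I f).
Proof. exists i. apply eqZ_refl. Qed.

Lemma eqZ_mk (I : Type) (f g : I -> ZA X) : (forall i, eqZ (f i) (g i)) -> eqZ (mk I f) (mk I g).
Proof. intros H. split; intro i; exists i; auto. Qed.

Lemma memZ_irrefl a : ~ memZ a a.
Proof.
  induction a as [x|I f IH]; [simpl; auto|].
  intros [i Hi]. apply (IH i). eapply memZ_eqZ; [apply eqZ_refl | exact Hi | apply memZ_mk].
Qed.
End Extensionality.

#[export] Instance eqZ_Equivalence {X : Type} : Equivalence (@eqZ X).
Proof. split; [exact (eqZ_refl X) | exact (eqZ_sym X) | exact (eqZ_trans X)]. Qed.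

#[export] Instance memZ_Proper {X : Type} : Proper (eqZ ==> eqZ ==> iff) (@memZ X).
Proof. intros x x' Ex a a' Ea. split; apply memZ_eqZ; auto; symmetry; auto. Qed.

Section Pairs.
Variable X : Type.
Implicit Types a b c d u y : ZA X.

Definition singZ a := mk unit (fun _ => a).
Definition dblZ a b := mk bool (fun t => if t then a else b).

Lemma memZ_singZ u a : memZ u (singZ a) <-> eqZ u a.
Proof. split; [intros [_ H]; exact H | intro H; exists tt; exact H]. Qed.

Lemma memZ_dblZ u a b : memZ u (dblZ a b) <-> eqZ u a \/ eqZ u b.
Proof. split; [intros [[|] H]; auto | intros [H|H]; [exists true|exists false]; exact H]. Qed.

Lemma memZ_pairZ u a b : memZ u (pairZ a b) <-> eqZ u (singZ a) \/ eqZ u (dblZ a b).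
Proof. split; [intros [[|] H]; auto | intros [H|H]; [exists true|exists false]; exact H]. Qed.

Lemma pairZ_eqZ a a' b b' : eqZ a a' -> eqZ b b' -> eqZ (pairZ a b) (pairZ a' b').
Proof.
  intros Ea Eb. apply eqZ_mk. intros [|]; apply eqZ_mk; [intros _ | intros [|]]; auto.
Qed.

Lemma pairZ_inj a b c d : eqZ (pairZ a b) (pairZ c d) -> eqZ a c /\ eqZ b d.
Proof.
  intros E.
  assert (Eac : eqZ a c).
  { assert (H : memZ (singZ a) (pairZ c d)) by (rewrite <- E; apply memZ_pairZ; left; reflexivity).
    apply memZ_pairZ in H as [H|H].
    - apply memZ_singZ. rewrite <- H. apply memZ_singZ. reflexivity.
    - symmetry. apply memZ_singZ. rewrite H. apply memZ_dblZ. auto with relations. }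
  split; [exact Eac|].
  assert (Hd : eqZ d a \/ eqZ d b).
  { assert (H : memZ (dblZ c d) (pairZ a b)) by (rewrite E; apply memZ_pairZ; right; reflexivity).
    apply memZ_pairZ in H as [H|H]; [left; apply memZ_singZ | apply memZ_dblZ];
      rewrite <- H; apply memZ_dblZ; right; reflexivity. }
  assert (Hb : eqZ b c \/ eqZ b d).
  { assert (H : memZ (dblZ a b) (pairZ c d)) by (rewrite <- E; apply memZ_pairZ; right; reflexivity).
    apply memZ_pairZ in H as [H|H]; [left; apply memZ_singZ | apply memZ_dblZ];
      rewrite <- H; apply memZ_dblZ; right; reflexivity. }
  destruct Hb as [Hb|Hb]; [|exact Hb].
  destruct Hd as [Hd|Hd]; rewrite Hd; [rewrite Hb|]; auto with relations.
Qed.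
End Pairs.

#[export] Instance pairZ_Proper {X : Type} : Proper (eqZ ==> eqZ ==> eqZ) (@pairZ X).
Proof. intros a a' Ea b b' Eb. apply pairZ_eqZ; auto. Qed.

Section VonNeumann.
Variable X : Type.

Fixpoint pure (a : ZA X) : Prop :=
  match a with atom _ => False | mk _ f => forall i, pure (f i) end.

Lemma pure_vnZ n : pure (@vnZ X n).
Proof.
  induction n as [|n IH]; simpl; [intros []|].
  destruct (vnZ n) as [x|I f]; simpl in *; [contradiction|]. intros [i|]; simpl; auto.
Qed.

Lemma memZ_vnZ k (y : ZA X) : memZ y (vnZ k) <-> exists j, j < k /\ eqZ y (vnZ j).
Proof.
  revert y. induction k as [|k IH]; intro y.
  - split; [intros [[] _] | intros [j [Hj _]]; lia].
  - change (vnZ (S k)) with (succZ X (@vnZ X k)).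
    assert (Hs : memZ y (succZ X (vnZ k)) <-> memZ y (vnZ k) \/ eqZ y (vnZ k)).
    { generalize (pure_vnZ k). destruct (vnZ k) as [x|I f]; [contradiction|]. intros _.
      split; [intros [[i|] H]; [left; exists i|right]; auto
             | intros [[i H]|H]; [exists (Some i)|exists None]; auto]. }
    rewrite Hs, IH. split.
    + intros [[j [Hj H]]|H]; [exists j|exists k]; split; auto; lia.
    + intros [j [Hj H]]. destruct (Nat.eq_dec j k) as [->|Hne]; [right; auto | left; exists j; split; auto; lia].
Qed.

Lemma vnZ_inj i j : eqZ (@vnZ X i) (vnZ j) -> i = j.
Proof.
  intros E. destruct (Nat.lt_total i j) as [H|[H|H]]; auto; exfalso.
  - apply (memZ_irrefl X (vnZ i)). rewrite E at 2. apply memZ_vnZ. exists i. auto with relations.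
  - apply (memZ_irrefl X (vnZ j)). rewrite <- E at 2. apply memZ_vnZ. exists j. auto with relations.
Qed.
End VonNeumann.

Arguments pure {X} _.


Section Action.
Context {X : Type} (D : DynIdeal X).
Notation inv := (ginv X D).
Implicit Types a u v z : ZA X.

Lemma actZ_mul g h a : actZ D (gmul D g h) a = actZ D g (actZ D h a).
Proof.
  induction a as [x|I f IH]; simpl; [rewrite actM; reflexivity|].
  f_equal. extensionality i. apply IH.
Qed.

Lemma actZ_trivial g : (forall x, act D g x = x) -> forall a, actZ D g a = a.
Proof.
  intros Hg a. induction a as [x|I f IH]; simpl; [rewrite Hg; reflexivity|].
  f_equal. extensionality i. apply IH.
Qed.

Lemma actZ_one a : actZ D (gone X D) a = a.
Proof. apply actZ_trivial, act1. Qed.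

Lemma actZ_pure g a : pure a -> actZ D g a = a.
Proof.
  induction a as [x|I f IH]; simpl; [tauto|].
  intros H. f_equal. extensionality i. auto.
Qed.

Lemma act_invK g (x : X) : act D (inv g) (act D g x) = x.
Proof. rewrite <- actM, gmulV. apply act1. Qed.

Lemma actZ_invK g a : actZ D (inv g) (actZ D g a) = a.
Proof. rewrite <- actZ_mul, gmulV. apply actZ_one. Qed.

Lemma act_inj g (x y : X) : act D g x = act D g y -> x = y.
Proof. intros H. rewrite <- (act_invK g x), <- (act_invK g y), H. reflexivity. Qed.

Lemma actZ_eqZ g a b : eqZ a b -> eqZ (actZ D g a) (actZ D g b).
Proof.
  revert b. induction a as [x|I f IH]; intros [y|J h]; simpl; try tauto.
  - intros ->. reflexivity.
  - intros [H1 H2]. split.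
    + intro i. destruct (H1 i) as [j Hj]. exists j. auto.
    + intro j. destruct (H2 j) as [i Hi]. exists i. auto.
Qed.

Lemma actZ_eqZ_inj g a b : eqZ (actZ D g a) (actZ D g b) -> eqZ a b.
Proof. intros H. apply (actZ_eqZ (inv g)) in H. rewrite !actZ_invK in H. exact H. Qed.

Lemma actZ_memZ g z a : memZ z a -> memZ (actZ D g z) (actZ D g a).
Proof. destruct a as [y|I f]; simpl; [auto|]. intros [i Hi]. exists i. apply actZ_eqZ, Hi. Qed.

Lemma actZ_pairZ g u v : actZ D g (pairZ u v) = pairZ (actZ D g u) (actZ D g v).
Proof.
  unfold pairZ. simpl. f_equal. extensionality t. destruct t; simpl; [reflexivity|].
  f_equal. extensionality t'. destruct t'; reflexivity.
Qed.

Lemma stab_eqZ a a' g : eqZ a a' -> stab D a g -> stab D a' g.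
Proof. unfold stab. intros E H. rewrite <- E at 2. rewrite <- H. apply actZ_eqZ. symmetry. exact E. Qed.

Lemma stab_mk (I : Type) (f : I -> ZA X) g : (forall i, stab D (f i) g) -> stab D (mk I f) g.
Proof. intros H. split; intro i; exists i; apply H. Qed.

Lemma stab_pairZ u v g : stab D u g -> stab D v g -> stab D (pairZ u v) g.
Proof. unfold stab. intros Hu Hv. rewrite actZ_pairZ, Hu, Hv. reflexivity. Qed.

Lemma stab_subfamily (I : Type) (f : I -> ZA X) (Q : ZA X -> Prop) g :
  (forall z z', eqZ z z' -> Q z -> Q z') -> (forall h z, Q z -> Q (actZ D h z)) ->
  stab D (mk I f) g -> stab D (mk {i : I | Q (f i)} (fun s => f (proj1_sig s))) g.
Proof.
  intros HQeq HQact [H1 H2]. split.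
  - intros [i Hi]. destruct (H1 i) as [j Hj].
    exists (exist _ j (HQeq _ _ Hj (HQact g _ Hi))). exact Hj.
  - intros [j Hj]. destruct (H2 j) as [i Hi].
    assert (Qi : Q (f i)).
    { rewrite <- (actZ_invK g (f i)). apply HQact. eapply HQeq; [symmetry; exact Hi | exact Hj]. }
    exists (exist _ i Qi). exact Hi.
Qed.

Definition supports (b : X -> Prop) a : Prop := forall g, pstab D b g -> stab D a g.

Lemma supports_eqZ b a a' : eqZ a a' -> supports b a -> supports b a'.
Proof. intros E H g Hg. eapply stab_eqZ; eauto. Qed.

Lemma supports_pairZ b u v : supports b u -> supports b v -> supports b (pairZ u v).
Proof. intros Hu Hv g Hg. apply stab_pairZ; auto. Qed.

Lemma supports_pure b a : pure a -> supports b a.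
Proof. intros Ha g _. unfold stab. rewrite actZ_pure by exact Ha. reflexivity. Qed.

Lemma HS_supported a : HS D a -> exists b, Id D b /\ supports b a.
Proof. destruct a; simpl; tauto. Qed.

Lemma HS_mk b (I : Type) (f : I -> ZA X) :
  Id D b -> (forall i, supports b (f i)) -> (forall i, HS D (f i)) -> HS D (mk I f).
Proof.
  intros Hb Hs Hh. split; [|exact Hh]. exists b. split; [exact Hb|].
  intros g Hg. apply stab_mk. intro i. apply Hs, Hg.
Qed.

Lemma HS_pairZ b u v :
  Id D b -> supports b u -> supports b v -> HS D u -> HS D v -> HS D (pairZ u v).
Proof.
  intros Hb Su Sv Hu Hv. apply HS_mk with b; auto.
  - intros [|] g Hg; apply stab_mk; [intros _|intros [|]]; auto.
  - intros [|]; apply HS_mk with b; auto; intros [|]; auto.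
Qed.

Lemma HS_atom (x : X) : HS D (atom x).
Proof.
  split; [|exact I]. exists (fun y => y = x). split; [apply Id_single|].
  intros g Hg. apply Hg. reflexivity.
Qed.

Lemma HS_pure b a : Id D b -> pure a -> HS D a.
Proof.
  intros Hb. induction a as [x|I f IH]; simpl; [tauto|].
  intros H. apply HS_mk with b; auto. intro i. apply supports_pure, H.
Qed.

Definition pstab_trivial (d : X -> Prop) : Prop :=
  forall g, pstab D d g -> forall x, act D g x = x.

Lemma HS_of_pstab_trivial d : Id D d -> pstab_trivial d -> forall a, HS D a.
Proof.
  intros Hd Htriv a. induction a as [x|I f IH]; [apply HS_atom|].
  apply HS_mk with d; auto. intros i g Hg. unfold stab. rewrite actZ_trivial by (apply Htriv, Hg).
  reflexivity.
Qed.
End Action.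

#[export] Instance actZ_Proper {X : Type} (D : DynIdeal X) g : Proper (eqZ ==> eqZ) (actZ D g).
Proof. intros a a'. apply actZ_eqZ. Qed.

Section Criteria.
Context {X : Type} (D : DynIdeal X).
Implicit Types (a z : ZA X) (u : nat -> ZA X).

Definition enumZ (k : nat) (u : nat -> ZA X) : ZA X :=
  mk {j : nat | j < k} (fun s => u (proj1_sig s)).

Lemma memZ_enumZ z k u : memZ z (enumZ k u) <-> exists j, j < k /\ eqZ z (u j).
Proof.
  split; [intros [[j Hj] E]; eauto | intros [j [Hj E]]; exists (exist _ j Hj); exact E].
Qed.

Lemma finiteW_enumZ b k u : Id D b -> (forall j, supports D b (u j)) -> (forall j, HS D (u j)) ->
  (forall i j, i < k -> j < k -> eqZ (u i) (u j) -> i = j) -> finiteW D (enumZ k u).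
Proof.
  intros Hb Hs Hh Hinj. exists k, (enumZ k (fun j => pairZ (u j) (vnZ j))). split.
  { apply HS_mk with b; [exact Hb| |].
    - intros j. apply supports_pairZ; [apply Hs | apply supports_pure, pure_vnZ].
    - intros j. apply HS_pairZ with b; auto using supports_pure, pure_vnZ.
      apply HS_pure with b; auto using pure_vnZ. }
  split; [|split; [|split; [|split]]].
  - intros p [j [Hj E]]%memZ_enumZ. exists (u j), (vnZ j).
    rewrite memZ_enumZ, memZ_vnZ. split; [|split]; eauto with relations.
  - intros x [j [Hj E]]%memZ_enumZ. exists (vnZ j). apply memZ_enumZ. exists j. rewrite E. auto with relations.
  - intros x y y' [i [Hi Ei]]%memZ_enumZ [j [Hj Ej]]%memZ_enumZ.
    apply pairZ_inj in Ei as [Exi Eyi]. apply pairZ_inj in Ej as [Exj Eyj].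
    assert (i = j) as <- by (apply Hinj; auto; rewrite <- Exi; exact Exj).
    rewrite Eyi, Eyj. reflexivity.
  - intros x x' y [i [Hi Ei]]%memZ_enumZ [j [Hj Ej]]%memZ_enumZ.
    apply pairZ_inj in Ei as [Exi Eyi]. apply pairZ_inj in Ej as [Exj Eyj].
    assert (i = j) as <- by (apply (vnZ_inj X); rewrite <- Eyi; exact Eyj).
    rewrite Exi, Exj. reflexivity.
  - intros y [j [Hj E]]%memZ_vnZ. exists (u j). apply memZ_enumZ. exists j. rewrite E. auto with relations.
Qed.

Lemma finiteW_eqZ a a' : eqZ a a' -> finiteW D a -> finiteW D a'.
Proof.
  intros E [n [f [Hf [B1 [B2 [B3 [B4 B5]]]]]]]. exists n, f. split; [exact Hf|].
  split; [|split; [|split; [|split]]]; auto.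
  - intros p Hp. destruct (B1 p Hp) as [x [y [Hx Hy]]]. exists x, y. rewrite <- E. auto.
  - intros x Hx. apply B2. rewrite E. exact Hx.
Qed.

Lemma wellorderableW_eqZ a a' : eqZ a a' -> wellorderableW D a -> wellorderableW D a'.
Proof.
  intros E [r [Hr [W1 [W2 [W3 [W4 W5]]]]]]. exists r. split; [exact Hr|].
  split; [|split; [|split; [|split]]].
  - intros p Hp. destruct (W1 p Hp) as [x [y Hxy]]. exists x, y. rewrite <- E. exact Hxy.
  - intros x Hx. apply W2. rewrite E. exact Hx.
  - intros x y z Hx Hy Hz. apply W3; rewrite E; assumption.
  - intros x y Hx Hy. apply W4; rewrite E; assumption.
  - intros s Hs Hne Hsub. apply W5; auto. intros z Hz. rewrite E. auto.
Qed.

(* Any well-order of the index type, transported to the equality classes of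
   [f], is supported by [b] because every [f i] is. *)
Lemma wellorderableW_of_supported b (K : Type) (f : K -> ZA X) :
  Id D b -> (forall i, supports D b (f i)) -> (forall i, HS D (f i)) -> wellorderableW D (mk K f).
Proof.
  intros Hb Hs Hh.
  destruct (quotient_wellorder (fun k k' => eqZ (f k) (f k'))) as [lt [compat [irr [trans [tri least]]]]].
  { split; intros ?; [reflexivity | intros ?; apply symmetry | intros ? ?; apply transitivity]. }
  set (r := mk {p : K * K | lt (fst p) (snd p)} (fun p => pairZ (f (fst (proj1_sig p))) (f (snd (proj1_sig p))))).
  assert (rel_r : forall x y, relZ r x y <-> exists k k', lt k k' /\ eqZ x (f k) /\ eqZ y (f k')).
  { intros x y. split.
    - intros [[[k k'] H] E]. apply pairZ_inj in E. exists k, k'. tauto.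
    - intros [k [k' [H [Ex Ey]]]]. exists (exist _ (k, k') H). apply pairZ_eqZ; assumption. }
  exists r. split.
  { apply HS_mk with b; auto; intros p.
    - apply supports_pairZ; apply Hs.
    - apply HS_pairZ with b; auto. }
  split; [|split; [|split; [|split]]].
  - intros p [[[k k'] H] E]. exists (f k), (f k'). split; [|split]; auto using memZ_mk.
  - intros x _ [k [k' [H [E1 E2]]]]%rel_r. apply (irr k). apply (compat k k k' k); auto with relations.
    rewrite <- E2. exact E1.
  - intros x y z _ _ _ [k1 [k2 [L12 [E1 E2]]]]%rel_r [k3 [k4 [L34 [E3 E4]]]]%rel_r.
    apply rel_r. exists k1, k4. split; auto. apply trans with k3; auto.
    apply (compat k1 k1 k2 k3); auto with relations. rewrite <- E2. exact E3.
  - intros x y [k Ex] [k' Ey]. destruct (tri k k') as [L|[E|L]].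
    + left. apply rel_r. eauto.
    + right; left. rewrite Ex, Ey. exact E.
    + right; right. apply rel_r. eauto.
  - intros s _ [z Hz] Hsub.
    destruct (least (fun k => memZ (f k) s)) as [m [Hm Hmin]].
    { destruct (Hsub z Hz) as [k Ek]. exists k. rewrite <- Ek. exact Hz. }
    exists (f m). split; [exact Hm|]. intros z' Hz' [k [k' [L [E1 E2]]]]%rel_r.
    apply (Hmin k); [rewrite <- E1; exact Hz'|]. apply (compat k k k' m); auto with relations.
Qed.

Lemma choiceFun_exists F : (forall x, memZ x F -> exists z, memZ z x) -> exists f, choiceFun f F.
Proof.
  intros Hne. destruct F as [x|I Fi].
  { exists (mk Empty_set (fun e => match e with end)).
    split; [intros p [[] _]|split; [intros ? []|intros ? ? ? [[] _]]]. }
  destruct (invariant_choice (fun i j => eqZ (Fi i) (Fi j)) (fun i z => memZ z (Fi i)))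
    as [y [Hy yeq]].
  { intros i j z E H. rewrite <- E. exact H. }
  { intros i j E. symmetry. exact E. }
  { intro i. apply Hne, memZ_mk. }
  exists (mk I (fun i => pairZ (Fi i) (y i))). split; [|split].
  - intros p [i E]. exists (Fi i), (y i). split; [apply memZ_mk|auto].
  - intros x [i E]. exists (y i). exists i. rewrite E. reflexivity.
  - intros x z z' [i Ei] [j Ej]. apply pairZ_inj in Ei as [Exi Ezi]. apply pairZ_inj in Ej as [Exj Ezj].
    rewrite Ezi, Ezj, (yeq i j); [reflexivity|]. rewrite <- Exi. exact Exj.
Qed.
End Criteria.

Section Abelian.
Context {X : Type} (D : DynIdeal X) (Hab : abelian D).
Notation inv := (ginv X D).

Lemma act_comm g h (x : X) : act D g (act D h x) = act D h (act D g x).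
Proof. rewrite <- !actM, Hab. reflexivity. Qed.

Lemma act_invKr g (x : X) : act D g (act D (inv g) x) = x.
Proof. rewrite act_comm. apply act_invK. Qed.

Lemma stab_actZ g h a : stab D a h -> stab D (actZ D g a) h.
Proof. unfold stab. intros H. rewrite <- actZ_mul, Hab, actZ_mul, H. reflexivity. Qed.

Lemma supports_actZ b g a : supports D b a -> supports D b (actZ D g a).
Proof. intros H h Hh. apply stab_actZ, H, Hh. Qed.

Lemma HS_actZ g a : HS D a -> HS D (actZ D g a).
Proof.
  induction a as [x|I f IH]; [intros _; apply HS_atom|].
  intros [[b [Hb Hs]] Hh]. split; [|intro i; apply IH, Hh].
  exists b. split; [exact Hb|]. exact (supports_actZ b g (mk I f) Hs).
Qed.

Theorem unionWO_W : UnionWO_W D.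
Proof.
  intros a Ha Hset. destruct a as [x|J f]; [contradiction|].
  destruct Ha as [[b0 [Hb0 Hs0]] Hh].
  set (part := fun B : {B : X -> Prop | Id D B} =>
        mk {i : J | supports D (proj1_sig B) (f i)} (fun s => f (proj1_sig s))).
  assert (part_wo : forall B, wellorderableW D (part B)).
  { intros [B HB]. apply wellorderableW_of_supported with B; auto. intros [i Hi]. exact Hi. }
  assert (part_HS : forall B, HS D (part B)).
  { intros [B HB]. apply HS_mk with B; auto. intros [i Hi]. exact Hi. }
  assert (part_supported : forall B, supports D b0 (part B)).
  { intros B g Hg. apply stab_subfamily; [apply supports_eqZ | intros; apply supports_actZ; auto | auto]. }
  exists (mk _ part). split; [|split; [exact I|split; [|split]]].
  - apply HS_mk with b0; auto.
  - apply wellorderableW_of_supported with b0; auto.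
  - intros y [B E]. split.
    + destruct y; [contradiction|exact Logic.I].
    + apply wellorderableW_eqZ with (part B); [symmetry; exact E | apply part_wo].
  - intros z. split.
    + intros [i Ei]. destruct (HS_supported D (f i) (Hh i)) as [B [HB SB]].
      exists (part (exist _ B HB)). split; [apply memZ_mk|].
      exists (exist _ i SB). exact Ei.
    + intros [y [[B E] Hz]]. rewrite E in Hz. destruct Hz as [[i Hi] Ei]. exists i. exact Ei.
Qed.

Definition actn g (n : nat) (x : X) : X := Nat.iter n (act D g) x.

Lemma actn_add g m n x : actn g (m + n) x = actn g m (actn g n x).
Proof. apply Nat.iter_add. Qed.

Lemma act_actn g h n x : act D h (actn g n x) = actn g n (act D h x).
Proof.
  induction n as [|n IH]; [reflexivity|]. unfold actn in *. simpl. rewrite <- IH. apply act_comm.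
Qed.

Lemma actn_inj g n x y : actn g n x = actn g n y -> x = y.
Proof. induction n as [|n IH]; [auto|]. intros H. apply IH, (act_inj D g), H. Qed.

Definition periodic_mod g (a : X) (k : nat) : Prop :=
  forall e, 0 < e -> actn g e a = a -> e mod k = 0.

(* [k] is the least period of [a] under [g], or [2] when the orbit is infinite. *)
Lemma exists_periodic_mod g a : act D g a <> a -> exists k, 2 <= k /\ periodic_mod g a k.
Proof.
  intros Hg. destruct (classic (exists n, 0 < n /\ actn g n a = a)) as [Hex|Hno].
  - destruct (dec_inh_nat_subset_has_unique_least_element _ (fun n => classic _) Hex)
      as [k [[[Hk Hfix] Hmin] _]].
    exists k. split.
    + destruct k as [|[|k]]; [lia| |lia]. contradiction.
    + intros e He Hae. destruct (Nat.eq_dec (e mod k) 0) as [E|E]; [exact E|exfalso].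
      assert (Hr : actn g (e mod k) a = a).
      { assert (Hq : forall q, actn g (k * q) a = a).
        { induction q as [|q IH]; [rewrite Nat.mul_0_r; reflexivity|].
          replace (k * S q) with (k + k * q) by lia. rewrite actn_add, IH. exact Hfix. }
        rewrite (Nat.div_mod_eq e k), Nat.add_comm, actn_add, Hq in Hae. exact Hae. }
      assert (k <= e mod k) by (apply Hmin; split; [lia|exact Hr]).
      pose proof (Nat.mod_upper_bound e k ltac:(lia)). lia.
  - exists 2. split; [lia|]. intros e He Hae. exfalso. eauto.
Qed.

Lemma actn_mod g a k p q :
  0 < k -> periodic_mod g a k -> actn g p a = actn g q a -> p mod k = q mod k.
Proof.
  intros Hk Hper.
  assert (le_case : forall p q, q <= p -> actn g p a = actn g q a -> p mod k = q mod k).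
  { clear p q. intros p q Hqp E. destruct (Nat.eq_dec p q) as [->|Hne]; [reflexivity|].
    assert (Hfix : actn g (p - q) a = a).
    { apply (actn_inj g q). rewrite <- actn_add. replace (q + (p - q)) with p by lia. exact E. }
    destruct (proj1 (Nat.Div0.mod_divides _ _) (Hper (p - q) ltac:(lia) Hfix)) as [c Hc].
    replace p with (q + c * k) by lia. apply Nat.Div0.mod_add. }
  intros E. destruct (Nat.le_ge_cases q p); [auto|]. symmetry. auto.
Qed.

Definition atomset (P : X -> Prop) : ZA X := mk {y : X | P y} (fun s => atom (proj1_sig s)).

Lemma memZ_atomset (P : X -> Prop) x : memZ (atom x) (atomset P) <-> P x.
Proof.
  split; [intros [[y Py] E]; simpl in E; subst; exact Py | intros Px; exists (exist _ x Px); reflexivity].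
Qed.

Lemma actZ_atomset g (P Q : X -> Prop) :
  (forall y, P y -> Q (act D g y)) -> (forall y, Q y -> P (act D (inv g) y)) ->
  eqZ (actZ D g (atomset P)) (atomset Q).
Proof.
  intros HPQ HQP. split.
  - intros [y Py]. exists (exist _ _ (HPQ y Py)). reflexivity.
  - intros [y Qy]. exists (exist _ _ (HQP y Qy)). apply act_invKr.
Qed.

Lemma eqZ_atomset (P Q : X -> Prop) :
  (forall y, P y -> Q y) -> (forall y, Q y -> P y) -> eqZ (atomset P) (atomset Q).
Proof.
  intros HPQ HQP. split.
  - intros [y Py]. exists (exist _ _ (HPQ y Py)). reflexivity.
  - intros [y Qy]. exists (exist _ _ (HQP y Qy)). reflexivity.
Qed.

(* The atoms [g^n a] with [n] an integer congruent to [j] modulo [k]; the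
   exponent [n = k * (m2 - m1) + j] is kept natural by moving [k * m1] to the
   left-hand side. *)
Definition residue g a k j : ZA X :=
  atomset (fun y => exists m1 m2, actn g (k * m1) y = actn g (k * m2 + j) a).

Definition residues g a k : ZA X := enumZ k (residue g a k).

Lemma actZ_residue_succ g a k j : eqZ (actZ D g (residue g a k j)) (residue g a k (S j)).
Proof.
  apply actZ_atomset; intros y [m1 [m2 Hy]]; exists m1, m2.
  - rewrite <- act_actn, Hy. replace (k * m2 + S j) with (S (k * m2 + j)) by lia. reflexivity.
  - apply (act_inj D g). rewrite act_actn, act_invKr, Hy.
    replace (k * m2 + S j) with (S (k * m2 + j)) by lia. reflexivity.
Qed.

Lemma residue_add_mul g a k q r : eqZ (residue g a k (k * q + r)) (residue g a k r).
Proof.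
  apply eqZ_atomset; intros y [m1 [m2 Hy]].
  - exists m1, (m2 + q). rewrite Hy. f_equal. lia.
  - exists (m1 + q), m2. replace (k * (m1 + q)) with (k * q + k * m1) by lia.
    rewrite actn_add, Hy, <- actn_add. f_equal. lia.
Qed.

Lemma actZ_residue g a k j :
  0 < k -> eqZ (actZ D g (residue g a k j)) (residue g a k (S j mod k)).
Proof.
  intros Hk. rewrite actZ_residue_succ, (Nat.div_mod_eq (S j) k) at 1. apply residue_add_mul.
Qed.

Lemma residue_inj g a k i j : 0 < k -> periodic_mod g a k -> i < k -> j < k ->
  eqZ (residue g a k i) (residue g a k j) -> i = j.
Proof.
  intros Hk Hper Hi Hj E.
  assert (Hgi : memZ (atom (actn g i a)) (residue g a k j)).
  { rewrite <- E. apply memZ_atomset. exists 0, 0. rewrite Nat.mul_0_r. reflexivity. }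
  apply memZ_atomset in Hgi as [m1 [m2 Hm]]. rewrite <- actn_add in Hm.
  apply (actn_mod g a k) in Hm; [|exact Hk|exact Hper].
  replace (k * m1 + i) with (i + m1 * k) in Hm by lia.
  replace (k * m2 + j) with (j + m2 * k) in Hm by lia.
  rewrite !Nat.Div0.mod_add, !Nat.mod_small in Hm; auto.
Qed.

Lemma residue_supported g a k j h : act D h a = a -> stab D (residue g a k j) h.
Proof.
  intros Ha. unfold stab, residue. apply actZ_atomset; intros y [m1 [m2 Hy]]; exists m1, m2.
  - rewrite <- act_actn, Hy, act_actn, Ha. reflexivity.
  - apply (act_inj D h). rewrite act_actn, act_invKr, Hy, act_actn, Ha. reflexivity.
Qed.

Lemma HS_residue g a k j : HS D (residue g a k j).
Proof.
  split; [|intros ?; apply HS_atom].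
  exists (fun y => y = a). split; [apply Id_single|]. intros h Hh. apply residue_supported, Hh. reflexivity.
Qed.

Lemma HS_residues g a k : HS D (residues g a k).
Proof.
  apply HS_mk with (fun y => y = a); [apply Id_single | | intros ?; apply HS_residue].
  intros j h Hh. apply residue_supported, Hh. reflexivity.
Qed.

Lemma residues_stab g a k : 0 < k -> stab D (residues g a k) g.
Proof.
  intros Hk. split.
  - intros [i Hi]. exists (exist _ (S i mod k) (Nat.mod_upper_bound (S i) k ltac:(lia))).
    apply actZ_residue, Hk.
  - intros [j Hj]. simpl.
    assert (Hpred : exists i, i < k /\ S i mod k = j).
    { destruct j as [|j].
      - exists (k - 1). split; [lia|]. replace (S (k - 1)) with k by lia. apply Nat.Div0.mod_same.
      - exists j. split; [lia|]. apply Nat.mod_small, Hj. }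
    destruct Hpred as [i [Hi <-]]. exists (exist _ i Hi). apply actZ_residue, Hk.
Qed.

Lemma residue_moved g a k j : 2 <= k -> periodic_mod g a k -> j < k ->
  ~ eqZ (actZ D g (residue g a k j)) (residue g a k j).
Proof.
  intros Hk Hper Hj E. rewrite actZ_residue in E by lia.
  apply residue_inj in E; [|lia|exact Hper|apply Nat.mod_upper_bound; lia|exact Hj].
  destruct (Nat.eq_dec (S j) k) as [Ek|Nk].
  - rewrite Ek, Nat.Div0.mod_same in E. lia.
  - rewrite Nat.mod_small in E; lia.
Qed.

Lemma finiteW_residues g a k d : 0 < k -> periodic_mod g a k -> finiteW D (actZ D d (residues g a k)).
Proof.
  intros Hk Hper. change (finiteW D (enumZ k (fun j => actZ D d (residue g a k j)))).
  apply finiteW_enumZ with (fun y => y = a); [apply Id_single| | |].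
  - intros j. apply supports_actZ. intros h Hh. apply residue_supported, Hh. reflexivity.
  - intros j. apply HS_actZ, HS_residue.
  - intros i j Hi Hj E. apply actZ_eqZ_inj in E. eapply residue_inj; eauto.
Qed.

Definition translates {J : Type} (x : J -> ZA X) : ZA X :=
  mk (J * grp D) (fun p => actZ D (snd p) (x (fst p))).

Lemma HS_translates b {J : Type} (x : J -> ZA X) :
  Id D b -> (forall j, HS D (x j)) -> HS D (translates x).
Proof.
  intros Hb Hx. split; [|intros [j h]; apply HS_actZ, Hx].
  exists b. split; [exact Hb|]. intros g _. split.
  - intros [j h]. exists (j, gmul D g h). cbn [fst snd]. rewrite actZ_mul. reflexivity.
  - intros [j h]. exists (j, gmul D (inv g) h). cbn [fst snd].
    rewrite <- actZ_mul, gmulA, (Hab g (inv g)), gmulV, gmul1. reflexivity.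
Qed.

Definition moves (d : X -> Prop) g a k : Prop := pstab D d g /\ 2 <= k /\ periodic_mod g a k.

Lemma exists_moves d : ~ pstab_trivial D d -> exists g a k, moves d g a k.
Proof.
  intros Hd. apply not_all_ex_not in Hd as [g Hg]. apply imply_to_and in Hg as [Hg Hmove].
  apply not_all_ex_not in Hmove as [a Ha].
  destruct (exists_periodic_mod g a Ha) as [k Hk]. exists g, a, k. split; auto.
Qed.

Lemma not_ACfin_W b :
  Id D b -> (forall d, Id D d -> exists g a k, moves d g a k) -> ~ ACfin_W D.
Proof.
  intros Hb Hmove Hfin.
  destruct (choice (fun (d : {d | Id D d}) (t : grp D * X * nat) =>
              moves (proj1_sig d) (fst (fst t)) (snd (fst t)) (snd t))) as [w Hw].
  { intros [d Hd]. destruct (Hmove d Hd) as (g & a & k & H). exists (g, a, k). exact H. }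
  set (x := fun d => residues (fst (fst (w d))) (snd (fst (w d))) (snd (w d))).
  destruct (Hfin (translates x)) as [f [Hf [f_graph [f_total f_fun]]]].
  { apply HS_translates with b; [exact Hb|]. intro d. apply HS_residues. }
  { intros y [[d h] Ey]. cbn [fst snd] in Ey. destruct (Hw d) as (_ & Hk & Hper). split.
    - exists (actZ D h (residue (fst (fst (w d))) (snd (fst (w d))) (snd (w d)) 0)).
      rewrite Ey. apply actZ_memZ, memZ_enumZ. exists 0. split; [lia|reflexivity].
    - apply finiteW_eqZ with (actZ D h (x d)); [symmetry; exact Ey|].
      apply finiteW_residues; [lia|exact Hper]. }
  destruct (HS_supported D f Hf) as [d [Hd Sf]].
  set (d' := exist _ d Hd : {d | Id D d}).
  destruct (Hw d') as (Hg & Hk & Hper).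
  set (g := fst (fst (w d'))) in *. set (a := snd (fst (w d'))) in *. set (k := snd (w d')) in *.
  change (x d') with (residues g a k) in *.
  assert (Hx : memZ (residues g a k) (translates x)).
  { exists (d', gone X D). cbn [fst snd]. rewrite actZ_one. reflexivity. }
  destruct (f_total _ Hx) as [y Hy].
  assert (Hyx : memZ y (residues g a k)).
  { destruct (f_graph _ Hy) as [x' [y' [_ [Hy' E]]]].
    apply pairZ_inj in E as [E1 E2]. rewrite E1, E2. exact Hy'. }
  assert (Hgy : memZ (pairZ (residues g a k) (actZ D g y)) f).
  { assert (Sfg : eqZ (actZ D g f) f) by exact (Sf g Hg).
    assert (Sxg : eqZ (actZ D g (residues g a k)) (residues g a k))
      by exact (residues_stab g a k ltac:(lia)).
    pose proof (actZ_memZ D g _ _ Hy) as H. rewrite actZ_pairZ, Sfg, Sxg in H. exact H. }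
  apply memZ_enumZ in Hyx as [j [Hj Ey]].
  apply (residue_moved g a k j Hk Hper Hj). rewrite <- Ey. symmetry. exact (f_fun _ _ _ Hy Hgy).
Qed.

Theorem AC_W_of_ACfin_W : ACfin_W D -> AC_W D.
Proof.
  intros Hfin F HF Hne. destruct (HS_supported D F HF) as [b [Hb _]].
  destruct (classic (exists d, Id D d /\ pstab_trivial D d)) as [[d [Hd Htriv]]|Hno].
  - destruct (choiceFun_exists F Hne) as [f Hf]. exists f. split; [|exact Hf].
    apply (HS_of_pstab_trivial D d Hd Htriv).
  - exfalso. apply (not_ACfin_W b Hb); [|exact Hfin].
    intros d Hd. apply exists_moves. intros Htriv. apply Hno. eauto.
Qed.
End Abelian.

Theorem mainTheorem18 (X : Type) (D : DynIdeal X) :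
  abelian D -> UnionWO_W D /\ (ACfin_W D -> AC_W D).
Proof. intros Hab. split; [apply unionWO_W | apply AC_W_of_ACfin_W]; exact Hab. Qed.
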